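(* Suppose $\tilde B$ has nondegenerate coefficients. Then $\{\vartheta_m:m\in M^\circ_{\mathrm{uf}}\}$ is a reduced basis for the small canonical algebra $\underline{\mathrm{can}}(\tilde B)$.
   Context: Setup. $\Bbbk$ a field of characteristic $0$; $I$ finite, $I_{\mathrm{uf}}\subseteq I$, $I_{\mathrm{fr}}=I\setminus I_{\mathrm{uf}}$; $\tilde B=[\epsilon_{ij}]_{i\in I_{\mathrm{uf}},j\in I}$ an integer matrix with skew-symmetrizable square part $B$ (positive integers $d_i$, $d_i\epsilon_{ij}=-d_j\epsilon_{ji}$). $N_{\mathrm{uf}}$ lattice with basis $(e_i)_{i\in I_{\mathrm{uf}}}$ (componentwise order; $N^{0+}_{\mathrm{uf}}$ nonnegative elements, $N^+_{\mathrm{uf}}=N^{0+}_{\mathrm{uf}}\setminus\{0\}$), $M^\circ_{\mathrm{uf}}$ lattice with basis $(f_i)$, $V^*=M^\circ_{\mathrm{uf}}\otimes\mathbb R$, $\langle f_i,e_j\rangle=\delta_{ij}/d_i$. For $n=\sum a_ie_i$, $nB=\sum a_i\epsilon_{ij}f_j$. Indeterminates $(z_i)_{i\in I}$, $z^m=\prod z_i^{c_i}$ for $m=\sum c_if_i$; $\sigma_i=\prod_{j\in I_{\mathrm{fr}}}z_j^{\epsilon_{ij}}$, $\zeta_i=\prod_{j\in I}z_j^{\epsilon_{ij}}$; $\sigma^n=\prod\sigma_i^{a_i}$, $\zeta^n=\prod\zeta_i^{a_i}$; $\zeta^n=z^{nB}\sigma^n$. $\tilde B$ has nondegenerate coefficients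 if the rows of $[\epsilon_{ij}]_{i\in I_{\mathrm{uf}},j\in I_{\mathrm{fr}}}$ are linearly independent. Theta functions: $\vartheta_m$ ($m\in M^\circ_{\mathrm{uf}}$) is the theta function of Gross–Hacking–Keel–Kontsevich for the cluster scattering diagram of $\tilde B$ with generic basepoint in the positive orthant, constructed in $V^*$ as a sum over broken lines; the facts used are that $\vartheta_m=z^mF_m$ with $F_m\in\Bbbk[[\zeta]]$ of constant term $1$, and that products expand as $\vartheta_{p_1}\vartheta_{p_2}=\sum_m a(p_1,p_2,m)\vartheta_m$ (a convergent sum) with each $a(p_1,p_2,m)$ a formal power series in $(\sigma_i)$ with nonnegative integer coefficients. Small canonical algebra. $\Bbbk((\zeta))$ is the ring of formal series $\sum_{n\in N_{\mathrm{uf}}}c_n\zeta^n$ whose support has a componentwise lower bound. $\mathcal A=\bigoplus_{m\in M^\circ_{\mathrm{uf}}}z^m\Bbbk((\zeta))$ with the obvious multiplication (identified, by nondegeneracy, with series of Laurent monomials in $z$); for $v\in z^m\Bbbk((\zeta))$ set $\mathbf g(v)=m$ (so $\mathbf g(\sigma^n)=-nB$). $\underline{\mathrm{can}}(\tilde B)$ is the $\Bbbk[\sigma^{\pm1}]$-subalgebra of $\mathcal A$ generated by all $\vartheta_m$. A sequence in $\Bbbk((\zeta))$ converges if all its terms' supports have a common componentwise lower bound and each coefficient eventually stabilizes; a sequence $(v_k)$ in $\mathcal A$ converges if only finitely many $m$ occur with nonzero component in any $v_k$ and each component sequence converges in $\Bbbk((\zeta))$; a series converges if its partial sums do (independent of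 ordering). A countable subset $\overline{\mathcal U}\subseteq\underline{\mathrm{can}}(\tilde B)$ is a basis if every $v\in\underline{\mathrm{can}}(\tilde B)$ equals $\sum_{u}a_uu$ (convergent) for a unique function $u\mapsto a_u\in\Bbbk$. A reduced basis is a subset $\{u_m:m\in M^\circ_{\mathrm{uf}}\}\subseteq\underline{\mathrm{can}}(\tilde B)$ with each $u_m\in z^m\Bbbk[[\zeta]]$ having constant coefficient $1$, such that $\{\sigma^nu_m:n\in N_{\mathrm{uf}},m\in M^\circ_{\mathrm{uf}}\}$ is a basis. *)

From mathcomp Require Import all_boot all_order all_algebra.
Set Implicit Arguments. Unset Strict Implicit. Unset Printing Implicit Defensive.
Import Order.TTheory GRing.Theory Num.Theory.
Local Open Scope ring_scope.

(* I_uf = 'I_k, I_fr = 'I_l.  Both lattices M^o_uf (basis f_i) and N_uf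
   (basis e_i) are represented as integer row vectors 'rV[int]_k.
   B : 'M[int]_k is the square part [eps_ij]_{i,j in I_uf},
   Bfr : 'M[int]_(k,l) is the frozen part [eps_ij]_{i in I_uf, j in I_fr}.
   For n in N_uf, nB = n *m B. *)
Definition latt (k : nat) := 'rV[int]_k.

Definition leN (k : nat) (a b : latt k) : bool := [forall i, a 0 i <= b 0 i].

Definition skew_symmetrizable (k : nat) (B : 'M[int]_k) (d : 'I_k -> nat) :=
  (forall i, (0 < d i)%N) /\ (forall i j, (d i)%:Z * B i j = - ((d j)%:Z * B j i)).

Definition nondegenerate_coeffs (k l : nat) (Bfr : 'M[int]_(k, l)) :=
  forall n : 'rV[int]_k, n *m Bfr = 0 -> n = 0.

(* An element of A = (+)_m z^m k((zeta)) is recorded by its coefficient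
   function: v m n = coefficient of z^m zeta^n. *)
Definition Aelt (K : fieldType) (k : nat) := latt k -> latt k -> K.

Definition mono (K : fieldType) (k : nat) (g n : latt k) (c : K) : Aelt K k :=
  fun m' n' => if (m' == g) && (n' == n) then c else 0.

Definition addA (K : fieldType) (k : nat) (u v : Aelt K k) : Aelt K k :=
  fun m n => u m n + v m n.

Definition scaleA (K : fieldType) (k : nat) (c : K) (v : Aelt K k) : Aelt K k :=
  fun m n => c * v m n.

(* multiplication by the monomial z^g zeta^n *)
Definition shiftA (K : fieldType) (k : nat) (g n : latt k) (v : Aelt K k) : Aelt K k :=
  fun m' n' => v (m' - g) (n' - n).

(* sigma^n = z^{-nB} zeta^n *)
Definition sigmaA (K : fieldType) (k : nat) (B : 'M[int]_k) (n : latt k) : Aelt K k :=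
  mono (- (n *m B)) n 1.

(* Convergent (order-independent) summation of a family in A, following the
   definition of convergence: finitely many g-components overall, a common
   componentwise lower bound on zeta-supports, and each coefficient receives
   only finitely many nonzero contributions, whose sum is the coefficient of
   the limit. *)
Definition sums_to (K : fieldType) (k : nat) (J : eqType) (x : J -> Aelt K k)
    (s : Aelt K k) : Prop :=
  (exists S : seq (latt k), forall j m n, x j m n != 0 -> m \in S) /\
  (exists L : latt k, forall j m n, x j m n != 0 -> leN L n) /\
  (forall m n, exists F : seq J,
      [/\ uniq F, (forall j, x j m n != 0 -> j \in F) &
          s m n = \sum_(j <- F) x j m n]).

Definition is_prod (K : fieldType) (k : nat) (u v w : Aelt K k) : Prop :=
  sums_to (fun p : (latt k * latt k) * (latt k * latt k) =>
             mono (p.1.1 + p.2.1) (p.1.2 + p.2.2) (u p.1.1 p.1.2 * v p.2.1 p.2.2))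
          w.

Definition in_zm_series (K : fieldType) (k : nat) (m : latt k) (v : Aelt K k) :=
  forall m' n, v m' n != 0 -> m' = m /\ leN 0 n.

(* The small canonical algebra: the k[sigma^{+-1}]-subalgebra of A generated
   by the theta functions. *)
Inductive in_can (K : fieldType) (k : nat) (B : 'M[int]_k)
    (theta : latt k -> Aelt K k) : Aelt K k -> Prop :=
| can_theta m : in_can B theta (theta m)
| can_sigma n : in_can B theta (sigmaA K B n)
| can_scale (c : K) v : in_can B theta v -> in_can B theta (scaleA c v)
| can_add u v : in_can B theta u -> in_can B theta v -> in_can B theta (addA u v)
| can_mul u v w : in_can B theta u -> in_can B theta v -> is_prod u v w ->
                  in_can B theta w.

(* The facts about the GHKK theta functions used in the paper:
   theta_m = z^m F_m with F_m in k[[zeta]] of constant term 1, and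
   theta_p1 theta_p2 = sum_m a(p1,p2,m) theta_m (convergent), with
   a(p1,p2,m) = sum_{n >= 0} c(p1,p2,m,n) sigma^n, c(...) in Z_{>=0}. *)
Definition theta_props (K : fieldType) (k : nat) (B : 'M[int]_k)
    (theta : latt k -> Aelt K k) : Prop :=
  (forall m, in_zm_series m (theta m) /\ theta m m 0 = 1) /\
  exists c : latt k -> latt k -> latt k -> latt k -> nat,
    forall p1 p2,
      (forall m n, (c p1 p2 m n != 0)%N -> leN 0 n) /\
      exists w, is_prod (theta p1) (theta p2) w /\
        sums_to (fun q : latt k * latt k =>
                   shiftA (- (q.2 *m B)) q.2
                          (scaleA (c p1 p2 q.1 q.2)%:R (theta q.1))) w.

(* {sigma^n u_m : n, m} is a basis of the algebra inC (indexed by pairs (m,n)). *)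
Definition is_basis_sigma (K : fieldType) (k : nat) (B : 'M[int]_k)
    (inC : Aelt K k -> Prop) (u : latt k -> Aelt K k) : Prop :=
  forall v, inC v ->
    exists a : latt k * latt k -> K,
      sums_to (fun q : latt k * latt k =>
                 shiftA (- (q.2 *m B)) q.2 (scaleA (a q) (u q.1))) v /\
      forall b : latt k * latt k -> K,
        sums_to (fun q : latt k * latt k =>
                   shiftA (- (q.2 *m B)) q.2 (scaleA (b q) (u q.1))) v ->
        forall q, b q = a q.

Definition reduced_basis (K : fieldType) (k : nat) (B : 'M[int]_k)
    (inC : Aelt K k -> Prop) (u : latt k -> Aelt K k) : Prop :=
  [/\ forall m, inC (u m),
      forall m, in_zm_series m (u m) /\ u m m 0 = 1
    & is_basis_sigma B inC u].

(* The coefficient of z^g zeta^n in sigma^n' theta_(g + n'B) vanishes unless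
   n' <= n, and equals 1 for n' = n.  So the family (sigma^n theta_m) is
   unitriangular for the componentwise order, and every element of A with
   finitely many z-degrees and lower-bounded zeta-support (in particular every
   element of the canonical algebra) has a unique expansion in it, whose
   coefficients are computed by recursion on n within the finite box above
   the lower bound.  Only the shape of the theta functions enters. *)

From Pilot Require Import Defs.
From mathcomp Require Import all_boot all_order all_algebra.
Set Implicit Arguments. Unset Strict Implicit. Unset Printing Implicit Defensive.
Import Order.TTheory GRing.Theory Num.Theory.
Local Open Scope ring_scope.

Lemma leN_refl k (x : latt k) : leN x x.
Proof. exact/forallP. Qed.

Lemma leN_trans k (x y z : latt k) : leN x y -> leN y z -> leN x z.
Proof.
by move=> /forallP xy /forallP yz; apply/forallP => i; apply: le_trans (xy i) (yz i).
Qed.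

Lemma leN_subr_ge0 k (x y : latt k) : leN 0 (y - x) = leN x y.
Proof. by apply/forallP/forallP => H i; move: (H i); rewrite !mxE subr_ge0. Qed.

Definition minN k (a b : latt k) : latt k := \row_i Order.min (a 0 i) (b 0 i).

Lemma minN_l k (a b n : latt k) : leN a n -> leN (minN a b) n.
Proof. by move/forallP => H; apply/forallP => i; rewrite mxE ge_min H. Qed.

Lemma minN_r k (a b n : latt k) : leN b n -> leN (minN a b) n.
Proof. by move/forallP => H; apply/forallP => i; rewrite mxE ge_min H orbT. Qed.

Section Box.

Variables (k : nat) (L : latt k).

Definition depth (n : latt k) : nat := (\sum_(i < k) absz (n 0 i - L 0 i)%R)%N.

Lemma absz_sub_le (x n : latt k) i : leN L x -> leN x n ->
  (absz (x 0 i - L 0 i)%R <= absz (n 0 i - L 0 i)%R)%N.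
Proof.
move=> /forallP Lx /forallP xn.
by rewrite -lez_nat !abszE !ger0_norm ?subr_ge0 ?lerD2r // (le_trans (Lx i)).
Qed.

Lemma absz_sub_le_depth (n : latt k) i : (absz (n 0 i - L 0 i)%R <= depth n)%N.
Proof. by rewrite /depth (bigD1 i) //= leq_addr. Qed.

Lemma depth_lt (x n : latt k) : leN L x -> leN x n -> x != n -> (depth x < depth n)%N.
Proof.
move=> Lx xn x_neq_n.
have [i0 xn_i0] : exists i, x 0 i != n 0 i.
  apply/existsP; apply: contraNT x_neq_n => /existsPn x_eq_n.
  by apply/eqP/rowP => j; apply/eqP/negPn.
have lt_i0 : (absz (x 0 i0 - L 0 i0)%R < absz (n 0 i0 - L 0 i0)%R)%N.
  move: Lx xn => /forallP Lx /forallP xn.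
  rewrite -ltz_nat !abszE !ger0_norm ?subr_ge0 ?ltrD2r ?(le_trans (Lx i0)) //.
  by rewrite lt_neqAle xn_i0 xn.
rewrite /depth (bigD1 i0) //= [X in (_ < X)%N](bigD1 i0) //= -addSn.
by apply: leq_add => //; apply: leq_sum => i _; apply: absz_sub_le.
Qed.

(* Every x with L <= x <= n has entries L_i + c_i with 0 <= c_i <= depth n. *)
Definition box (n : latt k) : seq (latt k) :=
  undup [seq x <- map (fun f : {ffun 'I_k -> 'I_(depth n).+1} =>
                        \row_i (L 0 i + (f i : nat)%:Z) : latt k)
                      (enum {ffun 'I_k -> 'I_(depth n).+1}) | leN L x && leN x n].

Lemma box_uniq n : uniq (box n).
Proof. exact: undup_uniq. Qed.

Lemma mem_box n x : (x \in box n) = leN L x && leN x n.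
Proof.
rewrite mem_undup mem_filter; apply/andP/idP => [[] // | /[dup] /andP[Lx xn] ->].
split => //; apply/mapP.
exists [ffun i => inord (absz (x 0 i - L 0 i)%R) : 'I_(depth n).+1]; first by rewrite mem_enum.
apply/rowP => i; rewrite !mxE ffunE inordK; last first.
  by rewrite ltnS (leq_trans (absz_sub_le i Lx xn)) ?absz_sub_le_depth.
by rewrite abszE ger0_norm ?subr_ge0 1?addrC ?subrK //; move/forallP: Lx.
Qed.

End Box.

Lemma big_seq_support_eq (K : fieldType) (J : eqType) (x : J -> K) (F1 F2 : seq J) :
  uniq F1 -> uniq F2 -> (forall j, x j != 0 -> j \in F1) ->
  (forall j, x j != 0 -> j \in F2) ->
  \sum_(j <- F1) x j = \sum_(j <- F2) x j.
Proof.
move=> uF1 uF2 sF1 sF2.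
have nz_part F : \sum_(j <- F) x j = \sum_(j <- F | x j != 0) x j.
  by rewrite [RHS]big_mkcond; apply: eq_bigr => j _; case: eqP.
rewrite nz_part [RHS]nz_part -big_filter -[RHS]big_filter.
apply/perm_big/uniq_perm; rewrite ?filter_uniq //.
by move=> j; rewrite !mem_filter; case: (boolP (x j != 0)) => //= /[dup] /sF1 -> /sF2 ->.
Qed.

Lemma big_seq_neq0 (K : fieldType) (J : eqType) (x : J -> K) (F : seq J) :
  \sum_(j <- F) x j != 0 -> exists j, x j != 0.
Proof.
elim: F => [|j F IH]; first by rewrite big_nil eqxx.
by rewrite big_cons; have [-> | xj] := eqVneq (x j) 0; [rewrite add0r | exists j].
Qed.

Definition supported_in (K : fieldType) k (S : seq (latt k)) (L : latt k) (v : Aelt K k) :=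
  forall m n, v m n != 0 -> m \in S /\ leN L n.

Section ThetaExpansion.

Variables (K : fieldType) (k : nat) (B : 'M[int]_k) (theta : latt k -> Aelt K k).
Hypothesis theta_series : forall m, in_zm_series m (theta m).
Hypothesis theta_const : forall m, theta m m 0 = 1.

Definition expansion (b : latt k * latt k -> K) (q : latt k * latt k) : Aelt K k :=
  shiftA (- (q.2 *m B)) q.2 (scaleA (b q) (theta q.1)).

Lemma expansionE b q g n :
  expansion b q g n = b q * theta q.1 (g + q.2 *m B) (n - q.2).
Proof. by rewrite /expansion /shiftA /scaleA opprK. Qed.

Lemma expansion_neq0 b q g n : expansion b q g n != 0 ->
  [/\ b q != 0, q.1 = g + q.2 *m B & leN q.2 n].
Proof.
rewrite expansionE mulf_eq0 negb_or => /andP[bq_neq0 /theta_series[-> n_ge]].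
by rewrite -leN_subr_ge0.
Qed.

Lemma expansion_diag b q : expansion b q (q.1 - q.2 *m B) q.2 = b q.
Proof. by rewrite expansionE subrK subrr theta_const mulr1. Qed.

Lemma in_can_supported v : in_can B theta v -> exists S L, supported_in S L v.
Proof.
elim=> {v} [m | n | c v _ [S [L sv]] | u v _ [S1 [L1 su]] _ [S2 [L2 sv]]
           | u v w _ _ _ _ [[S wS] [[L wL] w_sum]]].
- by exists [:: m], 0 => m' n /theta_series[-> ?]; rewrite mem_seq1.
- exists [:: - (n *m B)], n => m' n'; rewrite /sigmaA /mono.
  by case: ifP => [/andP[/eqP -> /eqP ->] _ | _]; rewrite ?eqxx // mem_seq1 eqxx leN_refl.
- by exists S, L => m n; rewrite /scaleA mulf_eq0 negb_or => /andP[_ /sv].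
- exists (S1 ++ S2), (minN L1 L2) => m n; rewrite /Defs.addA mem_cat.
  have [/eqP -> | /su[-> L1n] _] := boolP (u m n == 0); last by rewrite minN_l.
  by rewrite add0r => /sv[-> L2n]; rewrite orbT minN_r.
- exists S, L => m n; have [F [_ _ ->]] := w_sum m n.
  by case/big_seq_neq0 => j wj; split; [apply: wS wj | apply: wL wj].
Qed.

Lemma expansion_lower_bound b v :
  sums_to (expansion b) v -> exists L, forall q, b q != 0 -> leN L q.2.
Proof.
move=> [_ [[L HL] _]]; exists L => q bq.
by apply: (HL q (q.1 - q.2 *m B)); rewrite expansion_diag.
Qed.

(* The coefficient of z^g zeta^n in sigma^n' theta_(g + n'B). *)
Definition tri_coef (g n' n : latt k) : K := theta (g + n' *m B) (g + n' *m B) (n - n').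

Lemma sums_to_expansion_tri b v L : sums_to (expansion b) v ->
  (forall q, b q != 0 -> leN L q.2) -> forall g n, leN L n ->
  v g n = b (g + n *m B, n)
          + \sum_(n' <- box L n | n' != n) b (g + n' *m B, n') * tri_coef g n' n.
Proof.
move=> [_ [_ v_sum]] bL g n Ln; have [F [uF sF ->]] := v_sum g n.
have n_box : n \in box L n by rewrite mem_box leN_refl Ln.
rewrite (@big_seq_support_eq _ _ _ _ [seq (g + n' *m B, n') | n' <- box L n]) //.
- rewrite big_map (bigD1_seq n) ?box_uniq //= expansionE subrr theta_const mulr1.
  by congr (_ + _); apply: eq_bigr => n' _; rewrite expansionE.
- by rewrite map_inj_uniq ?box_uniq // => x y /(congr1 snd).
move=> [m n'] /expansion_neq0[/bL L_n' /= -> n'_n]; apply/mapP; exists n' => //.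
by rewrite mem_box L_n' n'_n.
Qed.

Lemma expansion_coef_unique a b v :
  sums_to (expansion a) v -> sums_to (expansion b) v -> forall q, b q = a q.
Proof.
move=> va vb; have [La aLa] := expansion_lower_bound va.
have [Lb bLb] := expansion_lower_bound vb.
pose L := minN La Lb.
have aL q : a q != 0 -> leN L q.2 by move/aLa; apply: minN_l.
have bL q : b q != 0 -> leN L q.2 by move/bLb; apply: minN_r.
suff ab_eq g N n : (depth L n < N)%N -> b (g + n *m B, n) = a (g + n *m B, n).
  by move=> [m n]; have := ab_eq (m - n *m B) _ n (ltnSn _); rewrite subrK.
elim: N n => // N IH n n_lt.
have [Ln | not_Ln] := boolP (leN L n); last first.
  by rewrite (contraNeq (@bL (_, n)) not_Ln) (contraNeq (@aL (_, n)) not_Ln).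
have sums_eq : \sum_(n' <- box L n | n' != n) b (g + n' *m B, n') * tri_coef g n' n
             = \sum_(n' <- box L n | n' != n) a (g + n' *m B, n') * tri_coef g n' n.
  rewrite big_seq_cond [RHS]big_seq_cond; apply: eq_bigr => n' /andP[].
  rewrite mem_box => /andP[Ln' n'_n] n'_neq.
  by rewrite IH // (leq_trans (depth_lt Ln' n'_n n'_neq) n_lt).
have := sums_to_expansion_tri vb bL g Ln.
by rewrite (sums_to_expansion_tri va aL g Ln) sums_eq => /addIr.
Qed.

Section Existence.

Variables (v : Aelt K k) (S : seq (latt k)) (L : latt k).
Hypothesis v_supp : supported_in S L v.

(* Back-substitution in the unitriangular system; the fuel f only has to
   exceed the depth of n above L, see [coef_rec_fuel]. *)
Fixpoint coef_rec (f : nat) (g n : latt k) {struct f} : K :=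
  if f is f'.+1 then
    v g n - \sum_(n' <- box L n | n' != n) coef_rec f' g n' * tri_coef g n' n
  else 0.

Lemma coef_rec_fuel g f f' n : (depth L n < f)%N -> (depth L n < f')%N ->
  coef_rec f g n = coef_rec f' g n.
Proof.
elim: f f' n => [|f IH] [|f'] n //= n_f n_f'; congr (_ - _).
rewrite big_seq_cond [RHS]big_seq_cond; apply: eq_bigr => n' /andP[].
rewrite mem_box => /andP[Ln' n'_n] n'_neq; have := depth_lt Ln' n'_n n'_neq.
by move=> lt_n'; rewrite (IH f') // (leq_trans lt_n').
Qed.

Definition coef (q : latt k * latt k) : K :=
  let g := q.1 - q.2 *m B in
  if (g \in S) && leN L q.2 then coef_rec (depth L q.2).+1 g q.2 else 0.

Lemma coef_neq0 q : coef q != 0 -> ((q.1 - q.2 *m B) \in S) && leN L q.2.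
Proof. by rewrite /coef; case: ifP; rewrite ?eqxx. Qed.

Lemma coefE g n :
  coef (g + n *m B, n) = if (g \in S) && leN L n then coef_rec (depth L n).+1 g n else 0.
Proof. by rewrite /coef /= addrK. Qed.

Lemma coef_back_subst g n : g \in S -> leN L n ->
  coef (g + n *m B, n) =
  v g n - \sum_(n' <- box L n | n' != n) coef (g + n' *m B, n') * tri_coef g n' n.
Proof.
move=> gS Ln; rewrite coefE gS Ln /=; congr (_ - _).
rewrite big_seq_cond [RHS]big_seq_cond; apply: eq_bigr => n' /andP[].
rewrite mem_box => /andP[Ln' n'_n] n'_neq.
rewrite coefE gS Ln' (@coef_rec_fuel g (depth L n').+1 (depth L n)) //.
exact: depth_lt Ln' n'_n n'_neq.
Qed.

Lemma sums_to_expansion_coef : sums_to (expansion coef) v.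
Proof.
split; [|split].
- exists S => q m n /expansion_neq0[/coef_neq0/andP[qS _] q1 _].
  by rewrite q1 addrK in qS.
- exists L => q m n /expansion_neq0[/coef_neq0/andP[_ Lq] _]; exact: leN_trans.
move=> g n; exists [seq (g + n' *m B, n') | n' <- box L n]; split.
- by rewrite map_inj_uniq ?box_uniq // => x y /(congr1 snd).
- move=> [m n'] /expansion_neq0[/coef_neq0/andP[_ Ln'] /= -> n'_n].
  by apply/mapP; exists n'; rewrite ?mem_box ?Ln'.
rewrite big_map; under eq_bigr => n' _ do rewrite expansionE -/(tri_coef g n' n).
have [/andP[gS Ln] | not_gSLn] := boolP ((g \in S) && leN L n).
  have n_box : n \in box L n by rewrite mem_box leN_refl Ln.
  rewrite (bigD1_seq n) ?box_uniq //= coef_back_subst //.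
  by rewrite /tri_coef subrr theta_const mulr1 subrK.
rewrite (_ : v g n = 0); last by apply/eqP; apply: contraNT not_gSLn => /v_supp[-> ->].
rewrite big_seq big1 // => n'; rewrite mem_box => /andP[Ln' n'_n].
rewrite coefE; case: ifP => [/andP[gS _] | _]; last by rewrite mul0r.
by move: not_gSLn; rewrite gS (leN_trans Ln' n'_n).
Qed.

End Existence.

End ThetaExpansion.

Theorem mainTheorem4 (K : fieldType) (k l : nat) (B : 'M[int]_k)
    (Bfr : 'M[int]_(k, l)) (d : 'I_k -> nat) :
  [pchar K] =i pred0 ->
  skew_symmetrizable B d ->
  nondegenerate_coeffs Bfr ->
  forall theta : latt k -> Aelt K k,
    theta_props B theta ->
    reduced_basis B (in_can B theta) theta.
Proof.
move=> _ _ _ theta [theta_series_const _].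
have theta_series m : in_zm_series m (theta m) by case: (theta_series_const m).
have theta_const m : theta m m 0 = 1 by case: (theta_series_const m).
split=> [m | // | v /(in_can_supported theta_series) [S [L v_supp]]]; first exact: can_theta.
have v_sum := sums_to_expansion_coef B theta_series theta_const v_supp.
exists (coef B theta v S L); split=> // b b_sum q.
exact: (expansion_coef_unique theta_series theta_const (b := b) v_sum b_sum).
Qed.
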